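(* There exists a $(\circ,\wedge,\mathsf{A})$-algebra that is representable by partial functions and atomic, but has no atomic representation (equivalently, no complete representation) by partial functions. For instance, let the base be $\{p\}\sqcup\mathbb{N}_\infty$ with $\mathbb{N}_\infty=\mathbb{N}\cup\{\infty\}$, let $\mathcal{S}$ be the set of subsets of $\mathbb{N}_\infty$ that are either finite and omit $\infty$, or cofinite and contain $\infty$, and let $\mathfrak{F}$ consist of the identity functions restricted to $A\cup B$ with $A\subseteq\{p\}$, $B\in\mathcal{S}$, together with the function $f=\{(p,\infty)\}$. Then $\mathfrak{F}$ is closed under composition, intersection and antidomain, is atomic, and has no complete representation by partial functions.
   Context: A $(\circ,\wedge,\mathsf{A})$-algebra is a set with two binary operations $\circ,\wedge$ and one unary operation $\mathsf{A}$. An algebra of partial functions of this signature is a set of partial functions, with base $X$ the union of all their domains and ranges, closed under: composition $f\circ g=\{(x,z)\mid \exists y\,(x,y)\in f,(y,z)\in g\}$; intersection; antidomain $\mathsf{A}(f)=\{(x,x)\mid x\in X, x\notin\mathrm{dom}(f)\}$. A representation by partial functions is an isomorphism onto such an algebra. The order is $a\le b\iff a\wedge b=a$, with least element $0$. An atom is a minimal nonzero element; the algebra is atomic if every nonzero element is above an atom. A representation $\theta$ is atomic if whenever $(x,y)\in\theta(a)$ for some $a$, then $(x,y)\in\theta(b)$ for some atom $b$. It is complete if for every nonempty $S$ with $\bigwedge S$ existing, $\theta(\bigwedge S)=\bigcap\theta[S]$ (equivalently for joins and unions). *)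

From Stdlib Require Import Classical.
Unset Implicit Arguments.

Record CMAAlgebra : Type := {
  carrier :> Type;
  comp : carrier -> carrier -> carrier;
  meet : carrier -> carrier -> carrier;
  antidom : carrier -> carrier
}.

Section Defs.
Variable T : CMAAlgebra.

Definition le (a b : T) : Prop := meet T a b = a.

Definition is_zero (z : T) : Prop := forall b, le z b.

Definition is_atom (a : T) : Prop :=
  ~ is_zero a /\ forall b, le b a -> b <> a -> is_zero b.

Definition atomic_alg : Prop :=
  forall a, ~ is_zero a -> exists b, is_atom b /\ le b a.

Definition is_glb (S : T -> Prop) (m : T) : Prop :=
  (forall s, S s -> le m s) /\ (forall c, (forall s, S s -> le c s) -> le c m).

Definition rcomp (X : Type) (f g : X -> X -> Prop) : X -> X -> Prop :=
  fun x z => exists y, f x y /\ g y z.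

Definition base (X : Type) (th : T -> X -> X -> Prop) (x : X) : Prop :=
  exists a y, th a x y \/ th a y x.

Definition is_pfun_rep (X : Type) (th : T -> X -> X -> Prop) : Prop :=
  (forall a b, (forall x y, th a x y <-> th b x y) -> a = b) /\
  (forall a x y z, th a x y -> th a x z -> y = z) /\
  (forall a b x z, th (comp T a b) x z <-> rcomp X (th a) (th b) x z) /\
  (forall a b x y, th (meet T a b) x y <-> (th a x y /\ th b x y)) /\
  (forall a x y, th (antidom T a) x y <->
       (x = y /\ base X th x /\ ~ exists z, th a x z)).

Definition representable_pfun : Prop :=
  exists (X : Type) (th : T -> X -> X -> Prop), is_pfun_rep X th.

Definition atomic_rep (X : Type) (th : T -> X -> X -> Prop) : Prop :=
  forall a x y, th a x y -> exists b, is_atom b /\ th b x y.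

Definition complete_rep (X : Type) (th : T -> X -> X -> Prop) : Prop :=
  forall (S : T -> Prop) (m : T), (exists s, S s) -> is_glb S m ->
    forall x y, th m x y <-> (forall s, S s -> th s x y).

End Defs.

From Stdlib Require Import Arith Lia Classical FunctionalExtensionality PropExtensionality ProofIrrelevance.

(* If theta(f) contains (x, y) and f o e = f, then (y, y) is in theta(e), since theta(f)
   is functional.  In the algebra F every identity e on a cofinite set containing infinity
   satisfies f o e = f, so (y, y) lies in the images of all of them although their meet is 0;
   hence no representation is complete.  An atom b with (y, y) in theta(b) would put (x, y)
   in theta(f o b), but f o b = 0 for every atom b: an identity containing (infinity, infinity)
   is cofinite, so it lies strictly above a singleton and is not an atom. *)

Section Representation.
Context {T : CMAAlgebra} {X : Type} {th : T -> X -> X -> Prop}.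
Hypothesis Hrep : is_pfun_rep T X th.

Lemma rep_inj a b : (forall x y, th a x y <-> th b x y) -> a = b.
Proof. apply Hrep. Qed.

Lemma rep_functional a x y z : th a x y -> th a x z -> y = z.
Proof. apply Hrep. Qed.

Lemma rep_comp a b x z : th (comp T a b) x z <-> exists y, th a x y /\ th b y z.
Proof. apply Hrep. Qed.

Lemma rep_meet a b x y : th (meet T a b) x y <-> th a x y /\ th b x y.
Proof. apply Hrep. Qed.

Lemma rep_antidom a x y :
  th (antidom T a) x y <-> x = y /\ base T X th x /\ ~ exists z, th a x z.
Proof. apply Hrep. Qed.

Lemma rep_le_iff a b : le T a b <-> forall x y, th a x y -> th b x y.
Proof.
  split.
  - intros Hab x y h. unfold le in Hab. rewrite <- Hab, rep_meet in h. tauto.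
  - intro Hsub. apply rep_inj. intros x y. rewrite rep_meet. split; [tauto|auto].
Qed.

Lemma rep_meet_antidom_empty a x y : ~ th (meet T a (antidom T a)) x y.
Proof. rewrite rep_meet, rep_antidom. intros [h [_ [_ Hn]]]. eauto. Qed.

Lemma rep_zero_iff a : is_zero T a <-> forall x y, ~ th a x y.
Proof.
  split.
  - intros Hz x y h. apply (rep_meet_antidom_empty a x y).
    exact (proj1 (rep_le_iff _ _) (Hz _) x y h).
  - intros Hempty b. apply rep_le_iff. intros x y h. destruct (Hempty x y h).
Qed.

Lemma rep_nonzero a : ~ is_zero T a -> exists x y, th a x y.
Proof.
  intro Ha. apply NNPP. intro Hn. apply Ha, rep_zero_iff. intros x y h. eauto.
Qed.

Lemma rep_singleton_atom a x0 y0 :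
  (forall x y, th a x y <-> x = x0 /\ y = y0) -> is_atom T a.
Proof.
  intro Ha. split.
  - rewrite rep_zero_iff. intro H. apply (H x0 y0), Ha. auto.
  - intros b Hba Hne. rewrite rep_le_iff in Hba. apply rep_zero_iff. intros x y hb.
    apply Hne, rep_inj. intros u v. split; [apply Hba|].
    intro hu. apply Ha in hu. pose proof (proj1 (Ha x y) (Hba x y hb)).
    destruct hu, H; subst. exact hb.
Qed.

Lemma rep_comp_fixed f e x y : comp T f e = f -> th f x y -> th e y y.
Proof.
  intros Hfe h. assert (h' := h). rewrite <- Hfe, rep_comp in h'.
  destruct h' as [w [hw he]]. replace w with y in he by exact (rep_functional f x y w h hw).
  exact he.
Qed.

Lemma no_atomic_rep f e :
  ~ is_zero T f -> comp T f e = f ->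
  (forall b, is_atom T b -> is_zero T (comp T f b)) -> ~ atomic_rep T X th.
Proof.
  intros Hf Hfe Hatoms Hat. destruct (rep_nonzero f Hf) as [x [y h]].
  destruct (Hat e y y (rep_comp_fixed f e x y Hfe h)) as [b [Hb hb]].
  apply (proj1 (rep_zero_iff _) (Hatoms b Hb) x y), rep_comp. eauto.
Qed.

Lemma no_complete_rep f (S : T -> Prop) m :
  ~ is_zero T f -> (exists s, S s) -> is_glb T S m -> is_zero T m ->
  (forall s, S s -> comp T f s = f) -> ~ complete_rep T X th.
Proof.
  intros Hf HS Hm Hm0 HfS Hc. destruct (rep_nonzero f Hf) as [x [y h]].
  apply (proj1 (rep_zero_iff m) Hm0 y y), (Hc S m HS Hm).
  intros s Hs. exact (rep_comp_fixed f s x y (HfS s Hs) h).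
Qed.

End Representation.
Inductive point : Type := P | Fin (n : nat) | Inf.

Definition finite_part (B : point -> Prop) : Prop := exists N, forall n, B (Fin n) -> n < N.
Definition cofinite_part (B : point -> Prop) : Prop := exists N, forall n, N <= n -> B (Fin n).

(* [B] stands for A ∪ B' of the statement: [B P] is free (A ⊆ {p}) and B' = B ∩ ℕ∞ must lie in 𝒮. *)
Definition admissible (B : point -> Prop) : Prop :=
  (finite_part B /\ ~ B Inf) \/ (cofinite_part B /\ B Inf).

Lemma admissible_and B1 B2 :
  admissible B1 -> admissible B2 -> admissible (fun x => B1 x /\ B2 x).
Proof.
  intros [[[N HN] H1]|[[N HN] H1]] [[[M HM] H2]|[[M HM] H2]].
  - left. split; [exists N; intros n [h _]; auto|tauto].
  - left. split; [exists N; intros n [h _]; auto|tauto].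
  - left. split; [exists M; intros n [_ h]; auto|tauto].
  - right. split; [exists (N + M); intros n h; split; [apply HN|apply HM]; lia|tauto].
Qed.

Lemma admissible_not B : admissible B -> admissible (fun x => ~ B x).
Proof.
  intros [[[N HN] H1]|[[N HN] H1]].
  - right. split; auto. exists N. intros n h h'. apply HN in h'. lia.
  - left. split; [|tauto]. exists N. intros n h.
    destruct (Nat.lt_ge_cases n N); auto. exfalso. auto.
Qed.

Lemma admissible_point x : x <> Inf -> admissible (eq x).
Proof.
  intro Hx. left. split; [|auto]. exists (match x with Fin m => S m | _ => 0 end).
  intros n ->. simpl. lia.
Qed.

Lemma admissible_False : admissible (fun _ => False).
Proof. left. split; [exists 0; intros n []|tauto]. Qed.

Lemma admissible_True : admissible (fun _ => True).
Proof. right. split; [exists 0|]; auto. Qed.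

Definition id_on (B : point -> Prop) : point -> point -> Prop := fun x y => x = y /\ B x.
Definition f_rel : point -> point -> Prop := fun x y => x = P /\ y = Inf.
Definition meet_rel (R S : point -> point -> Prop) : point -> point -> Prop :=
  fun x y => R x y /\ S x y.
Definition antidom_rel (R : point -> point -> Prop) : point -> point -> Prop :=
  fun x y => x = y /\ ~ exists z, R x z.

Lemma rel_ext (R S : point -> point -> Prop) : (forall x y, R x y <-> S x y) -> R = S.
Proof.
  intro H. extensionality x. extensionality y. apply propositional_extensionality, H.
Qed.

Lemma comp_id_on B1 B2 :
  rcomp point (id_on B1) (id_on B2) = id_on (fun x => B1 x /\ B2 x).
Proof.
  apply rel_ext. intros x y. unfold rcomp, id_on. split.
  - intros [z [[<- h1] [<- h2]]]. auto.
  - intros [<- h]. exists x. tauto.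
Qed.

Lemma comp_id_on_f B : rcomp point (id_on B) f_rel = fun x y => B P /\ f_rel x y.
Proof.
  apply rel_ext. intros x y. unfold rcomp, id_on, f_rel. split.
  - intros [z [[<- h1] [-> ->]]]. auto.
  - intros [h [-> ->]]. eauto.
Qed.

Lemma comp_f_id_on B : rcomp point f_rel (id_on B) = fun x y => B Inf /\ f_rel x y.
Proof.
  apply rel_ext. intros x y. unfold rcomp, id_on, f_rel. split.
  - intros [z [[-> ->] [<- h]]]. auto.
  - intros [h [-> ->]]. eauto.
Qed.

Lemma comp_f_f : rcomp point f_rel f_rel = id_on (fun _ => False).
Proof.
  apply rel_ext. intros x y. unfold rcomp, id_on, f_rel. split; [|tauto].
  intros [z [[_ ->] [e _]]]. discriminate.
Qed.

Lemma meet_id_on B1 B2 : meet_rel (id_on B1) (id_on B2) = id_on (fun x => B1 x /\ B2 x).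
Proof. apply rel_ext. intros x y. unfold meet_rel, id_on. tauto. Qed.

Lemma meet_id_on_f B : meet_rel (id_on B) f_rel = id_on (fun _ => False).
Proof.
  apply rel_ext. intros x y. unfold meet_rel, id_on, f_rel. split; [|tauto].
  intros [[<- _] [-> e]]. discriminate.
Qed.

Lemma meet_rel_comm R S : meet_rel R S = meet_rel S R.
Proof. apply rel_ext. intros x y. unfold meet_rel. tauto. Qed.

Lemma meet_rel_idem R : meet_rel R R = R.
Proof. apply rel_ext. intros x y. unfold meet_rel. tauto. Qed.

Lemma antidom_id_on B : antidom_rel (id_on B) = id_on (fun x => ~ B x).
Proof.
  apply rel_ext. intros x y. unfold antidom_rel, id_on. split.
  - intros [<- h]. split; [auto|]. intro hx. eauto.
  - intros [<- h]. split; [auto|]. intros [z [<- hz]]. auto.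
Qed.

Lemma antidom_f : antidom_rel f_rel = id_on (fun x => ~ P = x).
Proof.
  apply rel_ext. intros x y. unfold antidom_rel, id_on, f_rel. split.
  - intros [<- h]. split; [auto|]. intros <-. eauto.
  - intros [<- h]. split; [auto|]. intros [z [-> _]]. auto.
Qed.

Definition in_F (R : point -> point -> Prop) : Prop :=
  (exists B, admissible B /\ R = id_on B) \/ R = f_rel.

Lemma in_F_id_on B : admissible B -> in_F (id_on B).
Proof. left. eauto. Qed.

Lemma in_F_f : in_F f_rel.
Proof. right. reflexivity. Qed.

Lemma in_F_guard (Q : Prop) R : in_F R -> in_F (fun x y => Q /\ R x y).
Proof.
  intro HR. destruct (classic Q) as [HQ|HQ].
  - replace (fun x y => Q /\ R x y) with R; [exact HR|].
    apply rel_ext. tauto.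
  - replace (fun x y => Q /\ R x y) with (id_on (fun _ => False));
      [apply in_F_id_on, admissible_False|].
    apply rel_ext. unfold id_on. tauto.
Qed.

Lemma in_F_comp R S : in_F R -> in_F S -> in_F (rcomp point R S).
Proof.
  intros [[B1 [HB1 ->]] | ->] [[B2 [HB2 ->]] | ->].
  - rewrite comp_id_on. apply in_F_id_on, admissible_and; auto.
  - rewrite comp_id_on_f. apply in_F_guard, in_F_f.
  - rewrite comp_f_id_on. apply in_F_guard, in_F_f.
  - rewrite comp_f_f. apply in_F_id_on, admissible_False.
Qed.

Lemma in_F_meet R S : in_F R -> in_F S -> in_F (meet_rel R S).
Proof.
  intros [[B1 [HB1 ->]] | ->] [[B2 [HB2 ->]] | ->].
  - rewrite meet_id_on. apply in_F_id_on, admissible_and; auto.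
  - rewrite meet_id_on_f. apply in_F_id_on, admissible_False.
  - rewrite meet_rel_comm, meet_id_on_f. apply in_F_id_on, admissible_False.
  - rewrite meet_rel_idem. apply in_F_f.
Qed.

Lemma in_F_antidom R : in_F R -> in_F (antidom_rel R).
Proof.
  intros [[B [HB ->]] | ->].
  - rewrite antidom_id_on. apply in_F_id_on, admissible_not; auto.
  - rewrite antidom_f. apply in_F_id_on, admissible_not, admissible_point. discriminate.
Qed.

Definition Elt : Type := {R : point -> point -> Prop | in_F R}.

Local Notation rel a := (proj1_sig a).

Definition F : CMAAlgebra := {|
  carrier := Elt;
  comp := fun a b => exist _ _ (in_F_comp _ _ (proj2_sig a) (proj2_sig b));
  meet := fun a b => exist _ _ (in_F_meet _ _ (proj2_sig a) (proj2_sig b));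
  antidom := fun a => exist _ _ (in_F_antidom _ (proj2_sig a)) |}.

Lemma elt_ext (a b : Elt) : (forall x y, rel a x y <-> rel b x y) -> a = b.
Proof.
  destruct a as [R HR], b as [S HS]. simpl. intro H.
  apply rel_ext in H. subst S. f_equal. apply proof_irrelevance.
Qed.

Lemma in_F_functional R x y z : in_F R -> R x y -> R x z -> y = z.
Proof.
  intros [[B [_ ->]] | ->].
  - intros [<- _] [<- _]. reflexivity.
  - intros [_ ->] [_ ->]. reflexivity.
Qed.

Definition top_elt : Elt := exist _ _ (in_F_id_on _ admissible_True).

Lemma rep_F : is_pfun_rep F point (fun a => rel a).
Proof.
  split; [|split; [|split; [|split]]].
  - intros a b H. apply elt_ext, H.
  - intros a x y z. apply in_F_functional, proj2_sig.
  - reflexivity.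
  - reflexivity.
  - intros a x y. simpl. unfold antidom_rel. split; [|tauto].
    intros [<- h]. repeat split; auto. exists top_elt, x. left. simpl. split; auto.
Qed.

Definition f_elt : Elt := exist _ _ in_F_f.
Definition zero_elt : Elt := exist _ _ (in_F_id_on _ admissible_False).

Definition tail (n : nat) (x : point) : Prop :=
  match x with P => False | Fin m => n <= m | Inf => True end.

Lemma admissible_tail n : admissible (tail n).
Proof. right. split; [exists n|]; simpl; auto. Qed.

Definition tail_elt (n : nat) : Elt := exist _ _ (in_F_id_on _ (admissible_tail n)).

Lemma in_F_Inf_Fin R : in_F R -> R Inf Inf -> exists n, R (Fin n) (Fin n).
Proof.
  intros [[B [HB ->]] | ->] h.
  - destruct h as [_ hB]. destruct HB as [[_ Hn]|[[N HN] _]]; [tauto|].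
    exists N. split; auto.
  - destruct h as [e _]. discriminate.
Qed.

Lemma singleton_below (a : F) x :
  x <> Inf -> rel a x x ->
  exists c : F, le F c a /\ forall u v, rel c u v <-> u = x /\ v = x.
Proof.
  intros Hx h. exists (exist _ _ (in_F_id_on _ (admissible_point x Hx))). split.
  - apply (rep_le_iff rep_F). simpl. intros u v [<- <-]. exact h.
  - simpl. unfold id_on. intros u v. split; [intros [<- <-]|intros [-> ->]]; auto.
Qed.

Lemma atomic_F : atomic_alg F.
Proof.
  intros a Ha. destruct (rep_nonzero rep_F a Ha) as [x [y h]].
  assert (Hatom : forall x, x <> Inf -> rel a x x -> exists b, is_atom F b /\ le F b a).
  { intros z Hz hz. destruct (singleton_below a z Hz hz) as [c [Hca Hc]].
    exists c. split; [apply (rep_singleton_atom rep_F c z z Hc)|exact Hca]. }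
  destruct (proj2_sig a) as [[B [_ Ea]] | Ea].
  - rewrite Ea in h. destruct h as [<- hB].
    assert (hx : rel a x x) by (rewrite Ea; split; auto).
    destruct x as [| n |]; [apply (Hatom P)|apply (Hatom (Fin n))|];
      try discriminate; auto.
    destruct (in_F_Inf_Fin _ (proj2_sig a) hx) as [n hn].
    apply (Hatom (Fin n)); [discriminate|exact hn].
  - exists a. split.
    + apply (rep_singleton_atom rep_F a P Inf). rewrite Ea. reflexivity.
    + apply (rep_le_iff rep_F). auto.
Qed.

Lemma f_elt_nonzero : ~ is_zero F f_elt.
Proof. rewrite (rep_zero_iff rep_F). intro H. apply (H P Inf). split; reflexivity. Qed.

Lemma comp_f_diag_Inf (e : F) :
  rel e Inf Inf -> (forall x y, rel e x y -> x = y) -> comp F f_elt e = f_elt.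
Proof.
  intros hInf Hdiag. apply elt_ext. intros x z. simpl. unfold rcomp, f_rel. split.
  - intros [w [[-> ->] h]]. apply Hdiag in h. auto.
  - intros [-> ->]. eauto.
Qed.

Lemma comp_f_tail n : comp F f_elt (tail_elt n) = f_elt.
Proof.
  apply comp_f_diag_Inf; [split; simpl; auto|]. intros x y [e _]. exact e.
Qed.

Lemma comp_f_atom (b : F) : is_atom F b -> is_zero F (comp F f_elt b).
Proof.
  intros [_ Hmin]. apply (rep_zero_iff rep_F). simpl. unfold rcomp, f_rel.
  intros u v [w [[_ ->] hb]].
  assert (hInf : rel b Inf Inf).
  { destruct (proj2_sig b) as [[B [_ Eb]] | Eb]; rewrite Eb in hb |- *.
    - destruct hb as [<- h]. split; auto.
    - destruct hb as [e _]. discriminate. }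
  destruct (in_F_Inf_Fin _ (proj2_sig b) hInf) as [n hn].
  destruct (singleton_below b (Fin n) ltac:(discriminate) hn) as [c [Hcb Hc]].
  apply (proj1 (rep_zero_iff rep_F c)) with (Fin n) (Fin n); [|apply Hc; auto].
  apply Hmin; [exact Hcb|]. intros ->. apply Hc in hInf. destruct hInf as [e _].
  discriminate.
Qed.

Lemma glb_tails : is_glb F (fun c => exists n, c = tail_elt n) zero_elt.
Proof.
  split.
  - intros s _. apply (rep_le_iff rep_F). intros x y [_ []].
  - intros c Hc. apply (rep_le_iff rep_F).
    assert (Hbelow : forall n x y, rel c x y -> x = y /\ tail n x).
    { intro n. apply (rep_le_iff rep_F c (tail_elt n)), Hc. eauto. }
    assert (Hnot : forall m, ~ rel c (Fin m) (Fin m)).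
    { intros m hm. destruct (Hbelow (S m) _ _ hm) as [_ H]. simpl in H. lia. }
    intros x y h. destruct (Hbelow 0 _ _ h) as [<- H].
    destruct x as [| m |]; [destruct H|destruct (Hnot m h)|].
    destruct (in_F_Inf_Fin _ (proj2_sig c) h) as [m hm]. destruct (Hnot m hm).
Qed.

Theorem mainTheorem11 :
  exists T : CMAAlgebra,
    representable_pfun T /\ atomic_alg T /\
    (forall (X : Type) (th : T -> X -> X -> Prop),
        is_pfun_rep T X th -> ~ atomic_rep T X th) /\
    (forall (X : Type) (th : T -> X -> X -> Prop),
        is_pfun_rep T X th -> ~ complete_rep T X th).
Proof.
  exists F. split; [|split; [|split]].
  - exists point, (fun a => rel a). exact rep_F.
  - exact atomic_F.
  - intros X th Hth. apply (no_atomic_rep Hth f_elt (tail_elt 0)).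
    + exact f_elt_nonzero.
    + apply comp_f_tail.
    + exact comp_f_atom.
  - intros X th Hth.
    apply (no_complete_rep Hth f_elt (fun c => exists n, c = tail_elt n) zero_elt).
    + exact f_elt_nonzero.
    + exists (tail_elt 0), 0. reflexivity.
    + exact glb_tails.
    + apply (rep_zero_iff rep_F). intros x y [_ []].
    + intros s [n ->]. apply comp_f_tail.
Qed.
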